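(* Consider the discrete first-price auction in the model with ties with $n=2$ bidders whose values are drawn independently and uniformly from $X=\{0,1,\dots,x\}$, where $x$ is odd. Then $\beta(v)=\lfloor v/2\rfloor$ is a symmetric equilibrium.
   Context: Model. Two risk-neutral bidders compete for one indivisible object. Values and bids lie in $X=\{0,1,2,\dots,x\}$; each bidder's value is drawn independently and uniformly from $X$. A (pure) strategy is a bidding function $\beta:X\to X$. In the model with ties, the higher bidder wins and, if the two bids are equal, each wins with probability $1/2$. In the first-price auction, a bidder with value $v_i$ bidding $b_i$ gets expected payoff $(v_i-b_i)\Pr(i\text{ wins})$. An equilibrium is a profile of bidding functions such that each bidder's bidding function maximises their expected payoff given the other's (a pure-strategy Bayes–Nash equilibrium) and such that no bidder uses a weakly dominated bidding function (a bidding function is weakly dominated if some other bidding function yields at least as high expected payoff against every opponent bidding function, and strictly higher against some). A symmetric equilibrium is an equilibrium in which both bidders use the same bidding function. *)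

From mathcomp Require Import all_boot all_order all_algebra.
Set Implicit Arguments. Unset Strict Implicit. Unset Printing Implicit Defensive.
Import Order.TTheory GRing.Theory Num.Theory.
Local Open Scope ring_scope.

Definition bidfun (x : nat) := 'I_(x.+1) -> 'I_(x.+1).

Definition win_prob (x : nat) (b c : 'I_(x.+1)) : rat :=
  if (c < b)%N then 1 else if b == c then 1 / 2%:R else 0.

(* Ex-ante expected payoff of the bidder using [b1] when the opponent uses [b2],
   values i.i.d. uniform on X: (v - b1 v) * Pr(win). *)
Definition payoff (x : nat) (b1 b2 : bidfun x) : rat :=
  \sum_(v : 'I_(x.+1)) \sum_(w : 'I_(x.+1))
     ((v%:R - (b1 v)%:R) * win_prob (b1 v) (b2 w)) / ((x.+1)%:R ^+ 2).

Definition weakly_dominates (x : nat) (b' b : bidfun x) : Prop :=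
  (forall g : bidfun x, payoff b g <= payoff b' g) /\
  (exists g : bidfun x, payoff b g < payoff b' g).

Definition weakly_dominated (x : nat) (b : bidfun x) : Prop :=
  exists b' : bidfun x, weakly_dominates b' b.

Definition is_equilibrium (x : nat) (b1 b2 : bidfun x) : Prop :=
  (forall b1' : bidfun x, payoff b1' b2 <= payoff b1 b2) /\
  (forall b2' : bidfun x, payoff b2' b1 <= payoff b2 b1) /\
  ~ weakly_dominated b1 /\ ~ weakly_dominated b2.

Definition is_symmetric_equilibrium (x : nat) (b : bidfun x) : Prop :=
  is_equilibrium b b.

Definition half_bid (x : nat) : bidfun x := fun v => inord (v./2).
Arguments half_bid : clear implicits.

From mathcomp Require Import all_boot all_order all_algebra.
From mathcomp Require Import ring lra.
Set Implicit Arguments. Unset Strict Implicit. Unset Printing Implicit Defensive.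
Import Order.TTheory GRing.Theory Num.Theory.
Local Open Scope ring_scope.

(* Write x = 2m + 1.  The ex-ante payoff of a bidding function
   b against g is, up to the positive factor 1/(x+1)^2, the sum over values v
   of the interim payoff (v - b v) * W_g(b v), where W_g(c) is the total
   winning probability of the bid c against the bids g w, w in X.
   1. General part: if b v is, for every v, the unique maximiser of the
      interim payoff against g, then b is a best response to g and every
      other bidding function does strictly worse against g; consequently no
      bidding function weakly dominates b.
   2. Against beta(w) = floor(w/2) every bid k <= m is placed by exactly two
      values (this is where x odd is used), so W(c) = 2c + 1 for c <= m and
      W(c) = 2m + 2 for c > m.
   3. Elementary arithmetic: for v <= 2m + 1 the function
      c |-> (v - c) * W(c) has the unique maximiser floor(v/2).
   Combining 1-3 with g = b = beta gives both the best-response conditions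
   and undominatedness, i.e. beta is a symmetric equilibrium. *)

Definition interim_payoff (x : nat) (g : bidfun x) (v c : 'I_(x.+1)) : rat :=
  (v%:R - c%:R) * \sum_(w : 'I_(x.+1)) win_prob c (g w).

Lemma payoff_interim (x : nat) (b g : bidfun x) :
  payoff b g =
  \sum_(v : 'I_(x.+1)) interim_payoff g v (b v) / (x.+1)%:R ^+ 2.
Proof.
by apply: eq_bigr => v _; rewrite -mulr_suml -mulr_sumr.
Qed.

Section UniqueBestResponse.
Variables (x : nat) (g b : bidfun x).
Hypothesis b_unique_argmax : forall (v c : 'I_(x.+1)),
  c != b v -> interim_payoff g v c < interim_payoff g v (b v).

Let norm_gt0 : 0 < ((x.+1)%:R ^+ 2 : rat)^-1.
Proof. by rewrite invr_gt0 exprn_gt0 // ltr0n. Qed.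

Let interim_le (v c : 'I_(x.+1)) :
  interim_payoff g v c <= interim_payoff g v (b v).
Proof. by case: (eqVneq c (b v)) => [->//|/b_unique_argmax/ltW]. Qed.

Lemma unique_argmax_best_response (b' : bidfun x) : payoff b' g <= payoff b g.
Proof.
by rewrite !payoff_interim; apply: ler_sum => v _; rewrite ler_pM2r.
Qed.

Lemma unique_argmax_strict (b' : bidfun x) (v : 'I_(x.+1)) :
  b' v != b v -> payoff b' g < payoff b g.
Proof.
move=> neq_v; rewrite !payoff_interim (bigD1 v) //= [X in _ < X](bigD1 v) //=.
apply: ltr_leD; first by rewrite ltr_pM2r // b_unique_argmax.
by apply: ler_sum => w _; rewrite ler_pM2r.
Qed.

(* A dominating b' would be at least as good against g, hence agree with b
   everywhere, hence never be strictly better. *)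
Lemma unique_argmax_undominated : ~ weakly_dominated b.
Proof.
move=> [b' [never_worse [h better_h]]].
have agree v : b' v = b v.
  apply/eqP; apply: contraTT (never_worse g) => /unique_argmax_strict.
  by rewrite -ltNge.
suff same : payoff b' h = payoff b h by rewrite same ltxx in better_h.
by apply: eq_bigr => v _; rewrite agree.
Qed.
End UniqueBestResponse.

Definition win_weight (b c : nat) : rat :=
  if (c < b)%N then 1 else if b == c then 1 / 2%:R else 0.

Lemma win_prob_weight (x : nat) (b c : 'I_(x.+1)) : win_prob b c = win_weight b c.
Proof. by []. Qed.

Lemma sum_win_weight (n b : nat) :
  \sum_(c < n) win_weight b c = if (b < n)%N then b%:R + 1 / 2%:R else n%:R.
Proof.
elim: n => [|n IH]; first by rewrite big_ord0.
rewrite big_ord_recr /= IH /win_weight.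
case: (ltngtP b n) => [lt_bn | lt_nb | ->]; last by rewrite ltnSn.
- by rewrite ltnS (ltnW lt_bn) addr0.
- by rewrite ltnS leqNgt lt_nb natr1.
Qed.

Lemma sum_halves (n : nat) (F : nat -> rat) :
  \sum_(i < n.*2) F i./2 = \sum_(k < n) (F k + F k).
Proof.
elim: n => [|n IH]; first by rewrite !big_ord0.
by rewrite doubleS !big_ord_recr /= IH uphalf_double doubleK addrA.
Qed.

Lemma odd_double_succ (x : nat) : odd x -> (x./2).*2.+1 = x.
Proof. by move=> odd_x; rewrite -[in RHS](odd_double_half x) odd_x. Qed.

(* W(c): the total (unnormalised) winning probability of bid c against the
   bids floor(w/2), w ranging over {0, ..., 2m + 1}. *)
Definition win_mass (m c : nat) : nat :=
  if (c <= m)%N then c.*2.+1 else m.*2.+2.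

(* beta never needs truncation: its value is exactly floor(w/2). *)
Lemma half_bid_val (x : nat) (w : 'I_(x.+1)) : (half_bid x w : nat) = w./2.
Proof.
rewrite inordK // ltnS leq_half_double (leq_trans (leq_ord w)) //.
by rewrite -addnn leqW // leq_addl.
Qed.

Lemma sum_win_prob_half_bid (x : nat) (c : 'I_(x.+1)) : odd x ->
  \sum_(w : 'I_(x.+1)) win_prob c (half_bid x w) = (win_mass x./2 c)%:R.
Proof.
move=> odd_x.
have size_X : x.+1 = (x./2).+1.*2 by rewrite doubleS odd_double_succ.
under eq_bigr => w _ do rewrite win_prob_weight half_bid_val.
move: (nat_of_ord c) => {}c.
rewrite -(big_mkord xpredT (fun w => win_weight c w./2)) size_X big_mkord.
rewrite sum_halves big_split /= sum_win_weight /win_mass ltnS.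
(* Two ties at one half each make one certain win. *)
have two_halves : 1 / 2%:R + 1 / 2%:R = 1 :> rat by lra.
move: two_halves; set h := 1 / 2%:R.
by case: ifP => _; rewrite -!addnn -!natr1 ?natrD; lra.
Qed.

Section HalfBidArgmax.
Variables (R : realDomainType) (m v : nat).
Hypothesis v_le : (v <= m.*2.+1)%N.

Definition bid_gain (c : nat) : R := (v%:R - c%:R) * (win_mass m c)%:R.

Let half_le : (v./2 <= m)%N.
Proof. by move/half_leq: v_le; rewrite /= uphalf_double. Qed.

Let value_split : v%:R = (v./2)%:R + (v./2)%:R + (odd v)%:R :> R.
Proof. by rewrite -!natrD addnn addnC odd_double_half. Qed.

Let odd01 : 0 <= (odd v)%:R :> R /\ (odd v)%:R <= 1 :> R.
Proof. by case: (odd v); split. Qed.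

(* Among bids c <= m: with d = c - floor(v/2) and e = odd v, the loss of c
   relative to floor(v/2) is d * (2d + 1 - 2e), positive for integers d <> 0. *)
Lemma bid_gain_capped_lt (c : nat) :
  (c <= m)%N -> c != v./2 -> bid_gain c < bid_gain v./2.
Proof.
move=> cm ck; rewrite /bid_gain /win_mass cm half_le value_split.
have [lo|hi] : (c%:R + 1 <= (v./2)%:R :> R) \/ ((v./2)%:R + 1 <= c%:R :> R).
  by case: (ltngtP c v./2) => h; [left|right|rewrite h eqxx in ck];
     rewrite natr1 ler_nat.
all: rewrite -!addnn -!natr1 !natrD; case: odd01 => e0 e1; nra.
Qed.

(* Bidding above m wins with certainty but is beaten by bidding m. *)
Lemma bid_gain_uncapped_lt (c : nat) : (m < c)%N -> bid_gain c < bid_gain m.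
Proof.
move=> mc; rewrite /bid_gain /win_mass leqnn leqNgt mc /=.
have mc' : m%:R + 1 <= c%:R :> R by rewrite natr1 ler_nat.
have vm : v%:R <= m%:R + m%:R + 1 :> R by rewrite -natrD natr1 ler_nat addnn.
have m0 : 0 <= m%:R :> R by [].
rewrite -!addnn -!natr1 !natrD; nra.
Qed.

Lemma bid_gain_unique_argmax (c : nat) : c != v./2 -> bid_gain c < bid_gain v./2.
Proof.
move=> ck; case: (leqP c m) => [cm | mc]; first exact: bid_gain_capped_lt.
apply: lt_le_trans (bid_gain_uncapped_lt mc) _.
case: (eqVneq m v./2) => [<- // | mk].
exact/ltW/bid_gain_capped_lt.
Qed.
End HalfBidArgmax.

Lemma half_bid_unique_argmax (x : nat) : odd x -> forall v c : 'I_(x.+1),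
  c != half_bid x v ->
  interim_payoff (half_bid x) v c < interim_payoff (half_bid x) v (half_bid x v).
Proof.
move=> odd_x v c neq_c.
have v_le : (v <= (x./2).*2.+1)%N by rewrite odd_double_succ // -ltnS.
rewrite /interim_payoff !sum_win_prob_half_bid // half_bid_val.
apply: bid_gain_unique_argmax => //.
by apply: contra neq_c => /eqP eq_c; apply/eqP/val_inj; rewrite /= half_bid_val.
Qed.

Theorem proposition6 (x : nat) (hx : odd x) :
  is_symmetric_equilibrium (half_bid x).
Proof.
have argmax := half_bid_unique_argmax hx.
have best_response b := unique_argmax_best_response argmax b.
have undominated := unique_argmax_undominated argmax.
split; first exact: best_response.
by split; [exact: best_response | split].
Qed.
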